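(* For every approval-based multi-winner election $\sigma=\langle\mathcal V,\mathcal C,S,B\rangle$, every non-empty $\mathcal A\subseteq\mathcal C$ and every $F\in\mathfrak F^{\mathrm{opt}}_{\sigma,\mathcal A}$, there exists a non-empty $\mathcal K\subseteq\mathcal A$ with the following two properties: 1. $\mathrm{Supp}_F(c)=\mathrm{maxMin}(\sigma,\mathcal A)$ for every $c\in\mathcal K$; 2. $F(y,c)=0$ for every $c\in\mathcal A\setminus\mathcal K$ and every $y\in2^{\mathcal C}$ with $y\cap\mathcal K\neq\emptyset$.
   Context: An approval-based multi-winner election is a tuple $\sigma=\langle \mathcal V,\mathcal C,S,B\rangle$, where $\mathcal V$ is a finite set of agents, $\mathcal C$ is a finite set of candidates, $1\le S\le|\mathcal C|$ is an integer, and $B:2^{\mathcal C}\to\mathbb N$ gives, for each $\mathcal A\subseteq\mathcal C$, the number $B(\mathcal A)$ of agents whose ballot is exactly $\mathcal A$ (with $\sum_{\mathcal A}B(\mathcal A)\le|\mathcal V|$). For a non-empty $\mathcal A\subseteq\mathcal C$, the family $\mathfrak F_{\sigma,\mathcal A}$ is the set of all $F:2^{\mathcal C}\times\mathcal A\to\mathbb R$ such that: - $F(y,c)\ge0$ for all $y$ and $c$; - $F(y,c)=0$ if $c\notin y$; - $\sum_{c\in\mathcal A\cap y}F(y,c)=B(y)$ whenever $y\cap\mathcal A\neq\emptyset$. We write $\mathrm{Supp}_F(c)=\sum_yF(y,c)$ and $\mathrm{maxMin}(\sigma,\mathcal A)=\sup_{F\in\mathfrak F_{\sigma,\mathcal A}}\min_{c\in\mathcal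 A}\mathrm{Supp}_F(c)$. We also write $\mathfrak F^{\mathrm{opt}}_{\sigma,\mathcal A}=\{F\in\mathfrak F_{\sigma,\mathcal A}:\mathrm{Supp}_F(c)\ge\mathrm{maxMin}(\sigma,\mathcal A)\ \forall c\in\mathcal A\}$. *)

From HB Require Import structures.
From mathcomp Require Import all_boot all_order all_algebra.
Set Implicit Arguments. Unset Strict Implicit. Unset Printing Implicit Defensive.
Import Order.TTheory GRing.Theory Num.Theory.
Local Open Scope ring_scope.

Definition election (V C : finType) (S : nat) (B : {set C} -> nat) : Prop :=
  (1 <= S <= #|C|)%N /\ (\sum_(Y : {set C}) B Y <= #|V|)%N.

(* F : 2^C x A -> R is represented by a total function {set C} -> C -> R;
   only its values at c \in A are meaningful. *)
Definition in_family (R : realFieldType) (C : finType) (B : {set C} -> nat)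
  (A : {set C}) (F : {set C} -> C -> R) : Prop :=
  (forall (y : {set C}) c, c \in A -> 0 <= F y c) /\
  (forall (y : {set C}) c, c \in A -> c \notin y -> F y c = 0) /\
  (forall y : {set C}, y :&: A != set0 -> \sum_(c in A :&: y) F y c = (B y)%:R).

Definition Supp (R : realFieldType) (C : finType) (F : {set C} -> C -> R) (c : C) : R :=
  \sum_(y : {set C}) F y c.

Definition is_minSupp (R : realFieldType) (C : finType) (A : {set C})
  (F : {set C} -> C -> R) (v : R) : Prop :=
  (exists2 c, c \in A & Supp F c = v) /\ (forall c, c \in A -> v <= Supp F c).

Definition is_maxMin (R : realFieldType) (C : finType) (B : {set C} -> nat)
  (A : {set C}) (m : R) : Prop :=
  let vals := fun v => exists F, in_family B A F /\ is_minSupp A F v in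
  (forall v, vals v -> v <= m) /\
  (forall u, (forall v, vals v -> v <= u) -> m <= u).

Definition in_opt_family (R : realFieldType) (C : finType) (B : {set C} -> nat)
  (A : {set C}) (m : R) (F : {set C} -> C -> R) : Prop :=
  in_family B A F /\ (forall c, c \in A -> m <= Supp F c).

From HB Require Import structures.
From mathcomp Require Import all_boot all_order all_algebra.
From mathcomp Require Import lra.
Set Implicit Arguments. Unset Strict Implicit. Unset Printing Implicit Defensive.
Import Order.TTheory GRing.Theory Num.Theory.
Local Open Scope ring_scope.

(* Let X collect the candidates whose F-support exceeds maxMin.  Whenever some
   c in X receives support under F from a ballot y that also approves a
   candidate d outside X, move a small amount of y's support from c to d in an
   auxiliary allocation G: c stays strictly above maxMin and d rises strictly
   above it, so d can join X.  When no such move is possible, K := A \ X has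
   both required properties, and it is non-empty since otherwise G would give
   every candidate of A strictly more than maxMin. *)

Lemma sum_delta (R : pzRingType) (T : finType) (S : {pred T}) (d : T) (k : R) :
  d \in S -> \sum_(e in S) (e == d)%:R * k = k.
Proof.
move=> dS; rewrite (bigD1 d) //= eqxx mul1r big1 ?addr0 //.
by move=> e /andP[_ /negbTE ->]; rewrite mul0r.
Qed.

Section Transfer.
Variables (R : realFieldType) (C : finType).
Implicit Types (G : {set C} -> C -> R) (y : {set C}) (c d : C).

Definition transfer G y c d (eps : R) : {set C} -> C -> R :=
  fun z e => G z e + (z == y)%:R * ((e == d)%:R * eps - (e == c)%:R * eps).

Lemma Supp_transfer G y c d eps e :
  Supp (transfer G y c d eps) e = Supp G e + ((e == d)%:R * eps - (e == c)%:R * eps).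
Proof. by rewrite /Supp big_split /= sum_delta. Qed.

Lemma sum_transfer G y c d eps z (S : {set C}) :
  c \in S -> d \in S ->
  \sum_(e in S) transfer G y c d eps z e = \sum_(e in S) G z e.
Proof.
move=> cS dS; rewrite big_split /= -mulr_sumr sumrB.
by rewrite !sum_delta // subrr mulr0 addr0.
Qed.

Lemma transfer_other G y c d eps z : z != y -> transfer G y c d eps z =1 G z.
Proof. by move=> /negbTE zy e; rewrite /transfer zy mul0r addr0. Qed.

Lemma transfer_in_family (B : {set C} -> nat) (A : {set C}) G y c d eps :
  in_family B A G -> c \in A :&: y -> d \in A :&: y -> 0 <= eps <= G y c ->
  in_family B A (transfer G y c d eps).
Proof.
move=> [G_ge0 [G_out G_sum]] cAy dAy /andP[eps_ge0 eps_le].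
have /setIP[cA cy] := cAy.
have /setIP[dA dy] := dAy.
split; [|split].
- move=> z e eA; have [->|zy] := eqVneq z y; last by rewrite transfer_other ?G_ge0.
  rewrite /transfer eqxx mul1r.
  have [<-|dc] := eqVneq d c; first by rewrite subrr addr0 G_ge0.
  have [->|_] := eqVneq e c.
    by rewrite eq_sym (negbTE dc) mul0r mul1r sub0r subr_ge0.
  by rewrite mul0r subr0 addr_ge0 ?G_ge0 ?mulr_ge0 ?ler0n.
- move=> z e eA ez; have [zy|zy] := eqVneq z y; last by rewrite transfer_other ?G_out.
  subst z; rewrite /transfer G_out //.
  have /negbTE -> : e != c by apply: contraNneq ez => ->.
  have /negbTE -> : e != d by apply: contraNneq ez => ->.
  by rewrite !mul0r subrr mulr0 add0r.
- move=> z zA; have [->|zy] := eqVneq z y; last first.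
    by rewrite -G_sum //; apply: eq_bigr => e _; rewrite transfer_other.
  rewrite -G_sum ?sum_transfer //.
  by apply/set0Pn; exists c; rewrite inE cy cA.
Qed.

End Transfer.

Section Lifting.
Variables (R : realFieldType) (C : finType) (B : {set C} -> nat) (A : {set C}).
Variables (m : R) (F : {set C} -> C -> R).
Implicit Types (X : {set C}) (G : {set C} -> C -> R).

(* G keeps every candidate of X strictly above m and is positive wherever F is,
   so that support can always be moved along the ballots used by F. *)
Definition lifting X G : Prop :=
  [/\ X \subset A, {in A, forall e, m < Supp F e -> e \in X}, in_family B A G,
      {in A, forall e, m <= Supp G e} /\ {in X, forall e, m < Supp G e} &
      forall z, {in A, forall e, F z e != 0 -> 0 < G z e}].

Definition flow_closed X : Prop :=
  forall c d (y : {set C}), c \in X -> d \in A :\: X -> d \in y -> F y c = 0.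

Lemma lifting_extend X G c d (y : {set C}) :
  lifting X G -> c \in X -> d \in A :\: X -> d \in y -> F y c != 0 ->
  exists G', lifting (d |: X) G'.
Proof.
move=> [XA X_F G_fam [G_ge G_gt] G_pos] cX /setDP[dA dX] dy Fyc.
have cA : c \in A := subsetP XA c cX.
have Gyc : 0 < G y c := G_pos y c cA Fyc.
have cy : c \in y.
  by apply: contraTT Gyc => /(G_fam.2.1 y c cA) ->; rewrite ltxx.
have /negbTE dc : d != c by apply: contraNneq dX => ->.
have Gc := G_gt c cX.
pose mn := Num.min (G y c) (Supp G c - m).
have mn_gt0 : 0 < mn by rewrite lt_min Gyc subr_gt0.
have [mn_le1 mn_le2] : mn <= G y c /\ mn <= Supp G c - m.
  by rewrite !ge_min !lexx ?orbT.
pose eps := mn / 2.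
have eps_gt0 : 0 < eps by rewrite /eps; lra.
have eps_lt : eps < G y c /\ eps < Supp G c - m by rewrite /eps; split; lra.
exists (transfer G y c d eps); split.
- by rewrite subUset sub1set dA XA.
- by move=> e eA /(X_F e eA) eX; rewrite setU1r.
- apply: transfer_in_family; rewrite ?inE ?cA ?dA ?cy ?dy //.
  by rewrite (ltW eps_gt0) (ltW eps_lt.1).
- split=> e; rewrite Supp_transfer.
  + move=> eA; have [->|_] := eqVneq e d.
      by rewrite dc mul1r mul0r subr0; have := G_ge d dA; lra.
    have [->|_] := eqVneq e c; first by rewrite mul1r mul0r sub0r; lra.
    by rewrite !mul0r subrr addr0 G_ge.
  + case/setU1P=> [->|eX].
      by rewrite dc eqxx mul1r mul0r subr0; have := G_ge d dA; lra.
    have /negbTE -> : e != d by apply: contraNneq dX => <-.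
    have [->|_] := eqVneq e c; first by rewrite mul1r mul0r sub0r; lra.
    by rewrite !mul0r subrr addr0 G_gt.
- move=> z e eA Fze; have [zy|zy] := eqVneq z y; last by rewrite transfer_other ?G_pos.
  subst z; rewrite /transfer eqxx mul1r; have := G_pos y e eA Fze.
  have [->|_] := eqVneq e d; first by rewrite dc mul1r mul0r subr0; lra.
  by have [->|_] := eqVneq e c; rewrite ?mul1r !mul0r ?sub0r ?subr0; lra.
Qed.

Lemma lifting_leaves_candidate X G :
  A != set0 -> is_maxMin B A m -> lifting X G -> A :\: X != set0.
Proof.
move=> /set0Pn[c0 c0A] hm [_ _ G_fam [_ G_gt] _].
have [c cA c_min] := arg_minP (Supp G) c0A.
have G_le : Supp G c <= m by apply: hm.1; exists G; split=> //; split; [exists c|].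
apply/set0Pn; exists c; apply/setDP; split=> //.
by apply: contraTN G_le => /G_gt; rewrite ltNge.
Qed.

Lemma flow_closed_lifting_exists X G :
  lifting X G -> exists X' G', lifting X' G' /\ flow_closed X'.
Proof.
move: {2}_.+1 (ltnSn #|A :\: X|) => n; elim: n X G => // n IH X G lt_n liftG.
have [/exists_inP[c cX /exists_inP[d dAX /existsP[y /andP[dy Fyc]]]]|stuck] :=
  boolP [exists c in X, exists d in A :\: X,
           exists y : {set C}, (d \in y) && (F y c != 0)].
- have [G' liftG'] := lifting_extend liftG cX dAX dy Fyc.
  apply: IH liftG'; rewrite setUC -setDDl.
  by move: lt_n; rewrite ltnS (cardsD1 d (A :\: X)) dAX.
- exists X, G; split=> // c d y cX dAX dy; apply/eqP.
  by apply: contraNT stuck => Fyc; apply/exists_inP; exists c => //;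
     apply/exists_inP; exists d => //; apply/existsP; exists y; rewrite dy.
Qed.

Lemma flow_closed_lifting_solution X G :
  A != set0 -> is_maxMin B A m -> {in A, forall c, m <= Supp F c} ->
  lifting X G -> flow_closed X ->
  [/\ A :\: X != set0, A :\: X \subset A,
      (forall c, c \in A :\: X -> Supp F c = m) &
      (forall c (y : {set C}), c \in A :\: (A :\: X) -> y :&: (A :\: X) != set0 ->
         F y c = 0)].
Proof.
move=> A0 hm F_ge liftG closedX; have [_ X_F _ _ _] := liftG; split.
- exact: lifting_leaves_candidate liftG.
- exact: subsetDl.
- move=> c /setDP[cA cX]; apply/eqP; rewrite eq_le F_ge // andbT leNgt.
  exact: contra (X_F c cA) cX.
- move=> c y; rewrite setDDr setDv set0U => /setIP[_ cX].
  by move=> /set0Pn[d /setIP[dy dAX]]; apply: closedX cX dAX dy.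
Qed.

End Lifting.

Theorem lemma3 (R : realFieldType) (V C : finType) (S : nat)
  (B : {set C} -> nat) (A : {set C}) (m : R) (F : {set C} -> C -> R) :
  election V S B ->
  A != set0 -> is_maxMin B A m -> in_opt_family B A m F ->
  exists K : {set C},
    [/\ K != set0, K \subset A,
        (forall c, c \in K -> Supp F c = m) &
        (forall c (y : {set C}), c \in A :\: K -> y :&: K != set0 -> F y c = 0)].
Proof.
move=> _ A0 hm [F_fam F_ge].
have lift0 : lifting B A m F [set e in A | m < Supp F e] F.
  split=> //.
  - by apply/subsetP=> e; rewrite inE => /andP[].
  - by move=> e eA me; rewrite inE eA me.
  - by split=> // e; rewrite inE => /andP[].
  - by move=> z e eA Fze; rewrite lt_def Fze F_fam.1.
have [X [G [liftG closedX]]] := flow_closed_lifting_exists lift0.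
by exists (A :\: X); apply: flow_closed_lifting_solution liftG closedX.
Qed.
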